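(* Let $\mathcal G=(V_{\min},V_{\max},E,w,\lambda)$ be a discounted payoff game, $\sigma,\sigma'$ joint strategies, and let $\nu$ be a valuation satisfying $H$ that minimises $f_\sigma$ over all solutions of $H$. If $f_{\sigma'}(\nu)<f_\sigma(\nu)$, then $\sigma'$ is better than $\sigma$.
   Context: A discounted payoff game is a tuple $\mathcal G=(V_{\min},V_{\max},E,w,\lambda)$ with $V=V_{\min}\cup V_{\max}$ finite (disjoint union), $E\subseteq V\times V$ with every vertex having an outgoing edge, $w:E\to\mathbb R$, $\lambda:E\to[0,1)$. A joint strategy is a map $\sigma:V\to V$ with $(v,\sigma(v))\in E$ for all $v$. $H$ is the system of inequations over $x\in\mathbb R^V$ containing, for each edge $e=(v,v')$, $x(v)\ge w_e+\lambda_e x(v')$ if $v\in V_{\max}$ and $x(v)\le w_e+\lambda_e x(v')$ if $v\in V_{\min}$. $\mathsf{offset}(x,(v,v'))=x(v)-(w_{(v,v')}+\lambda_{(v,v')}x(v'))$ if $v\in V_{\max}$, and $(w_{(v,v')}+\lambda_{(v,v')}x(v'))-x(v)$ otherwise. $f_\sigma(x)=\sum_{v\in V}\mathsf{offset}(x,(v,\sigma(v)))$. A joint strategy $\sigma'$ is better than $\sigma$ iff $\min\{f_{\sigma'}(x)\mid x \text{ solves } H\}<\min\{f_{\sigma}(x)\mid x\text{ solves } H\}$. *)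

From HB Require Import structures.
From mathcomp Require Import all_boot all_order all_algebra.
From mathcomp Require Import boolp classical_sets reals ereal.
Set Implicit Arguments. Unset Strict Implicit. Unset Printing Implicit Defensive.
Import Order.TTheory GRing.Theory Num.Theory.
Local Open Scope ring_scope.
Local Open Scope classical_set_scope.

(* A discounted payoff game on a finite vertex type V.
   V_max = [pred v | is_max v], V_min = its complement (disjoint union). *)
Record dpgame (R : realType) (V : finType) := DPGame {
  is_max : {pred V};
  edge : rel V;
  weight : V -> V -> R;          (* w_(v,v'), relevant only on edges *)
  discount : V -> V -> R;        (* lambda_(v,v'), relevant only on edges *)
  edge_total : forall v, exists v', edge v v';
  discount_range : forall v v', edge v v' -> 0 <= discount v v' < 1
}.

Section Defs.
Variables (R : realType) (V : finType) (G : dpgame R V).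

Definition joint_strategy (s : V -> V) : Prop := forall v, edge G v (s v).

Definition solves_H (x : V -> R) : Prop :=
  forall v v', edge G v v' ->
    if is_max G v then weight G v v' + discount G v v' * x v' <= x v
    else x v <= weight G v v' + discount G v v' * x v'.

Definition offset (x : V -> R) (v v' : V) : R :=
  if is_max G v then x v - (weight G v v' + discount G v v' * x v')
  else (weight G v v' + discount G v v' * x v') - x v.

Definition f_strat (s : V -> V) (x : V -> R) : R :=
  \sum_(v : V) offset x v (s v).

(* min { f_s(x) | x solves H }, taken as an infimum in the extended reals
   (it coincides with the minimum whenever the minimum exists). *)
Definition min_f (s : V -> V) : \bar R :=
  ereal_inf [set (f_strat s x)%:E | x in solves_H].

Definition better (s' s : V -> V) : Prop := (min_f s' < min_f s)%E.

End Defs.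

From HB Require Import structures.
From mathcomp Require Import all_boot all_order all_algebra.
From mathcomp Require Import boolp classical_sets reals ereal.
Import Order.TTheory GRing.Theory Num.Theory.
Set Implicit Arguments. Unset Strict Implicit. Unset Printing Implicit Defensive.
Local Open Scope ring_scope.

(* The value of a strategy is an infimum of f_s over the solutions of H.
   A solution minimising f_s attains it, while any other solution, here nu
   itself, bounds the value of s' from above; so the strict inequality at nu
   transfers to the values. *)

Section MinF.
Variables (R : realType) (V : finType) (G : dpgame R V) (s : V -> V).

Lemma min_f_le (x : V -> R) : solves_H G x -> (min_f G s <= (f_strat G s x)%:E)%E.
Proof. by move=> Hx; apply: ereal_inf_lbound; exists x. Qed.

Lemma min_f_attained (nu : V -> R) :
  solves_H G nu -> (forall x, solves_H G x -> f_strat G s nu <= f_strat G s x) ->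
  min_f G s = (f_strat G s nu)%:E.
Proof.
move=> Hnu Hmin; apply/le_anti; rewrite min_f_le //=.
by apply: le_ereal_inf_tmp => _ [x Hx <-]; rewrite lee_fin Hmin.
Qed.

End MinF.

Theorem lemma4p1 (R : realType) (V : finType) (G : dpgame R V)
    (s s' : V -> V) (nu : V -> R) :
  joint_strategy G s -> joint_strategy G s' ->
  solves_H G nu ->
  (forall x, solves_H G x -> f_strat G s nu <= f_strat G s x) ->
  f_strat G s' nu < f_strat G s nu ->
  better G s' s.
Proof.
move=> _ _ Hnu Hmin Hlt; rewrite /better (min_f_attained Hnu Hmin).
by apply: le_lt_trans (min_f_le s' Hnu) _; rewrite lte_fin.
Qed.
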